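(* Let $2\le r<s<k$ and let $H$ be a full $(s,s-r)$-starplus on $k$ vertices with excess $\lambda$ satisfying $$\lambda\le\frac{r\binom{k-s+r}{r}-(k-s+r)}{k-s}.$$ Then $H$ is $r$-balanced: every sub-hypergraph $H'\subseteq H$ with at least $s$ vertices satisfies $f^{(r)}(H')\le f^{(r)}(H)$.
   Context: A full $(s,c)$-starplus on $k$ vertices with excess $\lambda$ ($1\le c<s<k$) is an $s$-uniform hypergraph on a $k$-element vertex set $V$ with a distinguished $c$-set $C\subseteq V$, whose edge set is the edge-disjoint union of all $\binom{k-c}{s-c}$ $s$-subsets of $V$ containing $C$ and of $\lambda$ further $s$-subsets of $V$ not containing $C$. For an $s$-graph $H$ with $v_H$ vertices and $e_H$ edges, $f^{(r)}(H)=\frac{e_H}{v_H-s+r}$. *)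

From HB Require Import structures.
From mathcomp Require Import all_boot all_order all_algebra.
Set Implicit Arguments. Unset Strict Implicit. Unset Printing Implicit Defensive.
Import Order.TTheory GRing.Theory Num.Theory.

(* An s-uniform hypergraph on the finite vertex set T is given by its edge set
   E : {set {set T}} (every edge has exactly s vertices). *)
Definition uniform (T : finType) (s : nat) (E : {set {set T}}) : Prop :=
  forall e, e \in E -> #|e| = s.

(* Full (s,c)-starplus with distinguished c-set C and excess lam: the edge set
   is the disjoint union of all s-subsets containing C and of lam further
   s-subsets not containing C. *)
Definition full_starplus (T : finType) (s c lam : nat) (C : {set T})
    (E : {set {set T}}) : Prop :=
  [/\ #|C| = c,
      uniform s E,
      (forall e : {set T}, #|e| = s -> C \subset e -> e \in E)
    & #|[set e in E | ~~ (C \subset e)]| = lam].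

Definition f_r (T : finType) (s r : nat) (V : {set T}) (E : {set {set T}}) : rat :=
  (#|E|%:R / (#|V| - s + r)%:R)%R.

Definition subhypergraph (T : finType) (E : {set {set T}})
    (V' : {set T}) (E' : {set {set T}}) : Prop :=
  E' \subset E /\ (forall e, e \in E' -> e \subset V').

Definition r_balanced (T : finType) (s r : nat) (E : {set {set T}}) : Prop :=
  forall (V' : {set T}) (E' : {set {set T}}),
    subhypergraph E V' E' -> s <= #|V'| -> (f_r s r V' E' <= f_r s r [set: T] E)%R.

(* The full (s, s-r)-starplus H has C(k-s+r, r) + lam edges, and a
   sub-hypergraph on v' vertices has at most C(v'-s+r, r) + lam edges: the
   edges through the centre C inside V' are r-subsets of V' \ C, and at most
   lam edges avoid containing C.  Writing m = v'-s+r and M = k-s+r, balance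
   thus reduces to (C(m, r) + lam) M <= (C(M, r) + lam) m for r <= m <= M.
   Since m |-> C(m, r) is convex with C(r, r) = 1, C(m, r) lies below the
   chord from (r, 1) to (M, C(M, r)); together with the assumed bound on lam
   this gives the inequality. *)
From mathcomp Require Import all_boot all_order all_algebra zify.
Import Order.TTheory GRing.Theory Num.Theory.

Set Implicit Arguments.
Unset Strict Implicit.
Unset Printing Implicit Defensive.

Lemma card_draws_over (T : finType) (C W : {set T}) r :
  C \subset W ->
  #|[set e : {set T} | [&& C \subset e, e \subset W & #|e| == #|C| + r]]| =
  'C(#|W :\: C|, r).
Proof.
move=> sCW; rewrite -cards_draws.
set D := [set A : {set T} | A \subset W :\: C & #|A| == r].
have disjDC A : A \in D -> [disjoint A & C].
  by rewrite inE subsetD => /andP[/andP[]].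
have -> : [set e : {set T} | [&& C \subset e, e \subset W & #|e| == #|C| + r]]
    = [set A :|: C | A in D].
  apply/setP => e; rewrite inE; apply/idP/imsetP.
  - case/and3P=> sCe seW /eqP De; exists (e :\: C).
      by rewrite inE setSD //= cardsDS // De addKn.
    by rewrite setUC -{1}(setID e C) (setIidPr sCe).
  - case=> A AD ->; have := AD; rewrite inE => /andP[sAWC /eqP <-].
    rewrite subsetUr subUset sCW andbT cardsU disjoint_setI0 ?disjDC //.
    by rewrite cards0 subn0 addnC eqxx (subset_trans sAWC (subsetDl _ _)).
apply: card_in_imset => A1 A2 A1D A2D eqA.
have := congr1 (fun S : {set T} => S :\: C) eqA; rewrite !setDUl setDv !setU0.
by rewrite (setDidPl (disjDC _ A1D)) (setDidPl (disjDC _ A2D)).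
Qed.

(* Hockey-stick identity, bounding each summand by the last one. *)
Lemma leq_bin_hockey n a : 'C(n.+1 + a, n.+1) <= 1 + a * 'C(n + a, n).
Proof.
elim: a => [|a IHa]; first by rewrite !addn0 binn.
rewrite addnS binS -addSnnS.
have : 'C(n + a, n) <= 'C(n.+1 + a, n) by apply: leq_bin2l.
nia.
Qed.

(* Convexity of [m |-> 'C(m, n.+1)]: at [n.+1 + a] it lies below the chord
   from [(n.+1, 1)] to [(n.+1 + a + b, 'C(n.+1 + a + b, n.+1))]. *)
Lemma leq_bin_chord n a b :
  (a + b) * 'C(n.+1 + a, n.+1) <= a * 'C(n.+1 + a + b, n.+1) + b.
Proof.
elim: b => [|b IHb]; first by rewrite !addn0.
have -> : 'C(n.+1 + a + b.+1, n.+1) =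
    'C(n.+1 + a + b, n.+1) + 'C(n.+1 + a + b, n) by rewrite addnS binS.
have := leq_bin_hockey n a.
have : a * 'C(n + a, n) <= a * 'C(n.+1 + a + b, n).
  by rewrite leq_mul2l leq_bin2l ?orbT //; lia.
lia.
Qed.

Lemma starplus_balance_nat r m M lam :
  0 < r -> r <= m <= M -> lam * (M - r) + M <= r * 'C(M, r) ->
  ('C(m, r) + lam) * M <= ('C(M, r) + lam) * m.
Proof.
case: r => // n _ /andP[lerm lemM].
have [a eqm] : exists a, m = n.+1 + a by exists (m - n.+1); rewrite subnKC.
have [b eqM] : exists b, M = m + b by exists (M - m); rewrite subnKC.
rewrite eqM eqm -addnA addKn => hlam.
have [-> | b_gt0] := posnP b; first by rewrite !addn0.
have /leq_pmul2l <- : 0 < a + b by lia.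
have := leq_mul (leqnn (n.+1 + (a + b))) (leq_bin_chord n a b).
have := leq_mul (leqnn b) hlam.
rewrite !addnA; nia.
Qed.

Lemma card_sep_split (T : finType) (F : {set T}) (P : pred T) :
  #|[set x in F | P x]| + #|[set x in F | ~~ P x]| = #|F|.
Proof.
rewrite -(cardsID [set x | P x] F); congr (_ + _); apply: eq_card => x;
  by rewrite !inE andbC.
Qed.

Section FullStarplus.

Variables (T : finType) (s r lam : nat) (C : {set T}) (E : {set {set T}}).
Hypotheses (ler_s : r <= s) (HE : full_starplus s (s - r) lam C E).

Let card_centre : #|C| + r = s.
Proof. by case: HE => -> *; rewrite subnK. Qed.

Let card_off_centre : #|[set e in E | ~~ (C \subset e)]| = lam.
Proof. by case: HE. Qed.

Lemma card_starplus : #|E| = 'C(#|T| - (s - r), r) + lam.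
Proof.
case: HE => cardC unifE fullE _.
rewrite -(card_sep_split E (fun e : {set T} => C \subset e)) card_off_centre.
congr (_ + _).
have -> : [set e in E | C \subset e] =
    [set e : {set T} | [&& C \subset e, e \subset [set: T] & #|e| == #|C| + r]].
  apply/setP => e; rewrite !inE subsetT andTb card_centre.
  apply/idP/idP => [/andP[eE ->] | /andP[sCe /eqP De]].
  - by rewrite unifE ?eqxx.
  - by rewrite sCe andbT; apply: fullE.
rewrite card_draws_over ?subsetT // setTD; have := cardsC C.
by rewrite cardC => <-; rewrite addKn.
Qed.

Lemma card_sub_starplus V' E' :
  subhypergraph E V' E' -> #|E'| <= 'C(#|V'| - (s - r), r) + lam.
Proof.
case: HE => cardC unifE _ _ [sE'E sE'V'].
rewrite -(card_sep_split E' (fun e : {set T} => C \subset e)).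
rewrite leq_add //; last first.
  rewrite -card_off_centre subset_leq_card //; apply/subsetP => e.
  by rewrite !inE => /andP[/(subsetP sE'E) -> ->].
have [sCV' | nsCV'] := boolP (C \subset V'); last first.
  suff -> : [set e in E' | C \subset e] = set0 by rewrite cards0.
  apply/setP => e; rewrite !inE.
  apply/negbTE; apply: contra nsCV' => /andP[e'E sCe].
  exact: subset_trans sCe (sE'V' e e'E).
rewrite -cardC -(cardsDS sCV') -card_draws_over // subset_leq_card //.
apply/subsetP => e; rewrite !inE card_centre => /andP[e'E ->].
by rewrite sE'V' // unifE ?eqxx ?(subsetP sE'E).
Qed.

End FullStarplus.

Lemma int_frac_bound_nat (a b d lam : nat) : 0 < d ->
  (lam%:R <= (a%:Z - b%:Z)%:~R / d%:R :> rat)%R -> lam * d + b <= a.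
Proof.
move=> d_gt0; rewrite ler_pdivlMr ?ltr0n // rmorphB /= -natrM lerBrDr.
by rewrite -natrD ler_nat.
Qed.

Lemma ler_nat_frac (a b c d : nat) : 0 < b -> 0 < d -> a * d <= c * b ->
  (a%:R / b%:R <= c%:R / d%:R :> rat)%R.
Proof.
move=> b_gt0 d_gt0 le_ad_cb.
by rewrite ler_pdivrMr ?ltr0n // mulrAC ler_pdivlMr ?ltr0n // -!natrM ler_nat.
Qed.

Theorem proposition18 (r s k lam : nat) (T : finType) (C : {set T})
    (E : {set {set T}}) :
  2 <= r -> r < s -> s < k -> #|T| = k ->
  full_starplus s (s - r) lam C E ->
  (lam%:R <=
     ((r * 'C(k - s + r, r))%:Z - (k - s + r)%:Z)%:~R / (k - s)%:R :> rat)%R ->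
  r_balanced s r E.
Proof.
move=> le2r ltrs ltsk cardT HE /int_frac_bound_nat lam_bound V' E' subE' lesV'.
have lerV' : #|V'| <= k by rewrite -cardT max_card.
have lesr := ltnW ltrs.
rewrite /f_r cardsT cardT ler_nat_frac //; try lia.
rewrite (card_starplus lesr HE) cardT.
apply: leq_trans (leq_mul (card_sub_starplus lesr HE subE') (leqnn _)) _.
have subnBr n : s <= n -> n - (s - r) = n - s + r by lia.
rewrite !subnBr 1?(ltnW ltsk) //.
apply: starplus_balance_nat; first lia.
- apply/andP; split; lia.
- by rewrite addnK; apply: lam_bound; lia.
Qed.
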